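(* Let $k$ be an algebraically closed field and let $\mathcal{C}\subset\mathbb{P}^3$ be a quadric cone with vertex $v$. Fix an integer $d\ge 2$. Let $Y\in|\mathcal{O}_{\mathcal{C}}(d)|$ be an integral curve with only unibranch singularities and let $\phi:X\to Y$ be its normalization. Fix $q\in\mathcal{C}\setminus Y$ with $q\ne v$ and let $R_q$ be the line of $\mathcal{C}$ containing $q$. Then the linear projection from $q$ restricted to $Y$ is an injective morphism $Y\to\mathbb{P}^2$ (equivalently, its composition with $\phi$ is an injective morphism $X\to\mathbb{P}^2$) if and only if $R_q\cap Y$ consists of exactly one point.
   Context: $\mathcal{O}_{\mathcal{C}}(d)$ is the restriction of $\mathcal{O}_{\mathbb{P}^3}(d)$ to $\mathcal{C}$. *)

From HB Require Import structures.
From mathcomp Require Import all_boot all_order all_algebra.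
From mathcomp Require Import mpoly.
Set Implicit Arguments. Unset Strict Implicit. Unset Printing Implicit Defensive.
Import Order.TTheory GRing.Theory Num.Theory.
Local Open Scope ring_scope.

Section Defs.
Variable k : fieldType.

(* Points of P^3 are represented by nonzero column vectors of k^4. *)
Definition ev (p : {mpoly k[4]}) (y : 'cV[k]_4) : k := p.@[fun i => y i ord0].

Definition peq (y1 y2 : 'cV[k]_4) : Prop := exists c : k, c != 0 /\ y1 = c *: y2.

(* Linear forms l_i = sum_j A_ij X_j; the quadric cone C_A : l0 l1 = l2^2,
   i.e. the image of the standard cone x0 x1 = x2^2 under the projectivity A^-1. *)
Definition linform (A : 'M[k]_4) (i : 'I_4) : {mpoly k[4]} :=
  \sum_(j < 4) A i j *: 'X_j.
Definition coneQ (A : 'M[k]_4) : {mpoly k[4]} :=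
  linform A 0 * linform A 1 - linform A 2 ^+ 2.
Definition e3 : 'cV[k]_4 := \col_(i < 4) ((i == 3 :> nat)%:R).
Definition vertex (A : 'M[k]_4) : 'cV[k]_4 := invmx A *m e3.

Definition inI (Q F P : {mpoly k[4]}) : Prop :=
  exists a b : {mpoly k[4]}, P = a * Q + b * F.
Definition prime_ideal2 (Q F : {mpoly k[4]}) : Prop :=
  ~ inI Q F 1 /\ forall a b, inI Q F (a * b) -> inI Q F a \/ inI Q F b.

(* a pair (G,H) representing the element G/H of the function field of
   Y = V(Q,F): G, H homogeneous of the same degree, H not in the ideal *)
Definition frac (Q F G H : {mpoly k[4]}) : Prop :=
  exists n : nat, G \is n.-homog /\ H \is n.-homog /\ ~ inI Q F H.

(* A normalized discrete valuation of the function field K(Y), trivial on k,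
   given on representatives of nonzero elements. *)
Definition place (Q F : {mpoly k[4]}) (v : {mpoly k[4]} -> {mpoly k[4]} -> int) : Prop :=
  [/\ (forall G H G' H', frac Q F G H -> frac Q F G' H' -> ~ inI Q F G -> ~ inI Q F G' ->
          inI Q F (G * H' - G' * H) -> v G H = v G' H'),
      (forall G H G' H', frac Q F G H -> frac Q F G' H' -> ~ inI Q F G -> ~ inI Q F G' ->
          v (G * G') (H * H') = v G H + v G' H'),
      (forall G H G' H', frac Q F G H -> frac Q F G' H' -> ~ inI Q F G -> ~ inI Q F G' ->
          ~ inI Q F (G * H' + G' * H) ->
          Num.min (v G H) (v G' H') <= v (G * H' + G' * H) (H * H')),
      (forall c : k, c != 0 -> v c%:MP 1 = 0) &
      (exists G H, [/\ frac Q F G H, ~ inI Q F G & v G H = 1])].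

(* the valuation ring of v dominates the local ring O_{Y,y}:
   i.e. the point of the normalization given by v lies over y *)
Definition centered (Q F : {mpoly k[4]}) (v : {mpoly k[4]} -> {mpoly k[4]} -> int)
  (y : 'cV[k]_4) : Prop :=
  forall G H, frac Q F G H -> ev H y != 0 -> ~ inI Q F G ->
    0 <= v G H /\ (ev G y = 0 -> 0 < v G H).

Definition onY (Q F : {mpoly k[4]}) (y : 'cV[k]_4) : Prop :=
  y != 0 /\ ev Q y = 0 /\ ev F y = 0.

(* every point of Y is unibranch: at most one point of the normalization
   (= place of K(Y)/k) lies over it *)
Definition only_unibranch (Q F : {mpoly k[4]}) : Prop :=
  forall y, onY Q F y ->
  forall v1 v2, place Q F v1 -> place Q F v2 -> centered Q F v1 y -> centered Q F v2 y ->
  forall G H, frac Q F G H -> ~ inI Q F G -> v1 G H = v2 G H.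

(* y1 and y2 have the same image under the linear projection from q *)
Definition same_proj (q y1 y2 : 'cV[k]_4) : Prop :=
  exists c mu : k, c != 0 /\ y1 = c *: y2 + mu *: q.

Definition on_line (v q y : 'cV[k]_4) : Prop :=
  exists a b : k, y = a *: v + b *: q.

End Defs.

(* In coordinates z = A y the cone is Q(z) = z0 z1 - z2^2 = 0, a form of
   rank 3 whose radical is spanned by the vertex v.  If y1 and y2 = c y1 + mu q
   (mu != 0) both lie on Y, then Q has three zeros on the line through y1 and
   q, so it vanishes identically there: the pair (A y1, A q) is totally
   isotropic.  A nondegenerate ternary form has no isotropic planes, so y1 is
   dependent on q modulo v, i.e. y1 and y2 lie on the ruling R_q through v and
   q.  Conversely, F restricted to R_q is a binary form of degree d >= 1 not
   vanishing at q, so R_q meets Y, and all points of R_q other than q have the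
   same projection from q. *)
From HB Require Import structures.
From mathcomp Require Import all_boot all_order all_algebra.
From mathcomp Require Import mpoly.
From mathcomp Require Import ring zify.
Set Implicit Arguments. Unset Strict Implicit. Unset Printing Implicit Defensive.
Import GRing.Theory Num.Theory.
Local Open Scope ring_scope.

Section TopCoefficient.
Variable R : nzRingType.

Lemma coefM_top (p r : {poly R}) m n :
    (size p <= m.+1)%N -> (size r <= n.+1)%N ->
  (size (p * r)%R <= (m + n).+1)%N /\ (p * r)`_(m + n) = p`_m * r`_n.
Proof.
move=> sp sr; split.
  by apply: leq_trans (size_polyMleq _ _) _; move: sp sr; case: (size p); lia.
rewrite coefM (bigD1 (Ordinal (leq_addr n m.+1 : (m < (m + n).+1)%N))) //=.
rewrite addKn big1 ?addr0 // => [[j lt_j]] /= ne_jm.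
have [lt_jm|lt_mj|eq_jm] := ltngtP j m.
- by rewrite [r`_ _]nth_default ?mulr0 //; apply: leq_trans sr _; lia.
- by rewrite [p`_ _]nth_default ?mul0r //; apply: leq_trans sp _.
- by case/eqP: ne_jm; apply: val_inj.
Qed.

Lemma coefX_top (p : {poly R}) n e : (size p <= n.+1)%N ->
  (size (p ^+ e)%R <= (n * e).+1)%N /\ (p ^+ e)`_(n * e) = p`_n ^+ e.
Proof.
move=> sp; elim: e => [|e [IHsize IHcoef]]; first by rewrite expr0 muln0 size_poly1 coefC.
rewrite exprS mulnS; have [sizeM coefM] := coefM_top sp IHsize.
by rewrite sizeM coefM IHcoef exprS.
Qed.

Lemma coef_prod_top (I : Type) (s : seq I) (p : I -> {poly R}) (n : I -> nat) :
    (forall i, size (p i) <= (n i).+1)%N ->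
  (size (\prod_(i <- s) p i)%R <= (\sum_(i <- s) n i).+1)%N /\
  (\prod_(i <- s) p i)`_(\sum_(i <- s) n i)%N = \prod_(i <- s) (p i)`_(n i).
Proof.
move=> sp; elim: s => [|i s [IHsize IHcoef]]; first by rewrite !big_nil size_poly1 coefC.
rewrite !big_cons; have [sizeM coefM] := coefM_top (sp i) IHsize.
by rewrite sizeM coefM IHcoef.
Qed.

End TopCoefficient.

Section Evaluation.
Variable k : fieldType.
Implicit Types (F : {mpoly k[4]}) (y v q : 'cV[k]_4).

Lemma ev_dhomogZ F d c y : F \is d.-homog -> ev F (c *: y) = c ^+ d * ev F y.
Proof.
move=> homF; rewrite /ev !mevalE big_distrr /=; apply: eq_big_seq => m m_supp.
have <- : mdeg m = d := dhomog_mf homF m_supp.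
rewrite mulrCA mdegE -prodrXr -big_split /=; congr (_ * _).
by apply: eq_bigr => i _; rewrite mxE exprMn.
Qed.

Lemma homog_line_poly F d v q : F \is d.-homog ->
  exists P : {poly k}, [/\ (size P <= d.+1)%N, P`_d = ev F q &
                           forall t, P.[t] = ev F (v + t *: q)].
Proof.
move=> homF.
pose L (i : 'I_4) : {poly k} := (q i ord0)%:P * 'X + (v i ord0)%:P.
have sizeL i : (size (L i) <= 2)%N.
  by rewrite size_MXaddC; case: ifP => // _; rewrite size_polyC; case: (_ != 0).
have coefL i : (L i)`_1 = q i ord0 by rewrite coefD coefMX coefC /= coefC addr0.
exists (\sum_(m <- msupp F) F@_m *: \prod_(i < 4) L i ^+ m i).
have top m : m \in msupp F ->
    (size (\prod_(i < 4) L i ^+ m i)%R <= d.+1)%N /\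
    (\prod_(i < 4) L i ^+ m i)`_d = \prod_(i < 4) q i ord0 ^+ m i.
  move=> m_supp; have <- : mdeg m = d := dhomog_mf homF m_supp.
  rewrite mdegE.
  under eq_bigr do rewrite -[m _]mul1n.
  have [-> ->] :=
    coef_prod_top (index_enum 'I_4) (fun i => (coefX_top (m i) (sizeL i)).1).
  by split=> //; apply: eq_bigr => i _; rewrite (coefX_top _ (sizeL i)).2 coefL.
split.
- rewrite big_seq; apply: (big_ind (fun P : {poly k} => size P <= d.+1)%N)
    => [|P1 P2 s1 s2|m m_supp].
  + by rewrite size_poly0.
  + by apply: leq_trans (size_polyD _ _) _; rewrite geq_max s1 s2.
  + exact: leq_trans (size_scale_leq _ _) (top m m_supp).1.
- rewrite /ev mevalE coef_sum; apply: eq_big_seq => m m_supp.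
  by rewrite coefZ (top m m_supp).2.
- move=> t; rewrite /ev mevalE horner_sum; apply: eq_bigr => m _.
  rewrite hornerZ horner_prod; congr (_ * _); apply: eq_bigr => i _.
  by rewrite horner_exp /L !hornerE !mxE addrC mulrC.
Qed.

End Evaluation.

Lemma homog_root_on_line (k : closedFieldType) (F : {mpoly k[4]}) d (v q : 'cV[k]_4) :
  F \is d.-homog -> (0 < d)%N -> ev F q != 0 -> exists t, ev F (v + t *: q) = 0.
Proof.
move=> homF d_gt0 Fq; have [P [sizeP topP evP]] := homog_line_poly v q homF.
have sizeP_eq : size P = d.+1.
  apply/eqP; rewrite eqn_leq sizeP ltnNge; apply: contra Fq => le_size.
  by rewrite -topP nth_default.
have /closed_rootP [t /eqP Pt] : size P != 1%N by rewrite sizeP_eq eqSS -lt0n.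
by exists t; rewrite -evP.
Qed.

Section ProjectiveLines.
Variable k : fieldType.
Implicit Types (v q y : 'cV[k]_4).

Lemma peq_sym y1 y2 : peq y1 y2 -> peq y2 y1.
Proof.
case=> c [c0 ->]; exists c^-1; split; first by rewrite invr_eq0.
by rewrite scalerA mulVf ?scale1r.
Qed.

Lemma peq_trans y1 y2 y3 : peq y1 y2 -> peq y2 y3 -> peq y1 y3.
Proof.
case=> c [c0 ->] [c' [c'0 ->]]; exists (c * c'); split; last by rewrite scalerA.
by rewrite mulf_neq0.
Qed.

Lemma on_line_shift v q y c mu :
  on_line v q y -> on_line v q (c *: y + mu *: q).
Proof.
case=> a [b ->]; exists (c * a), (c * b + mu).
by rewrite scalerDr !scalerA -addrA -scalerDl.
Qed.

Lemma same_proj_on_line v q a b a' b' : a != 0 -> a' != 0 ->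
  same_proj q (a *: v + b *: q) (a' *: v + b' *: q).
Proof.
move=> a0 a'0; exists (a / a'), (b - a / a' * b').
split; first by rewrite mulf_neq0 ?invr_eq0.
by rewrite scalerDr !scalerA divfK // -addrA -scalerDl [_ * b' + _]addrC subrK.
Qed.

End ProjectiveLines.

Section ConeForm.
Variable k : fieldType.
Implicit Types (z w : 'cV[k]_4).

Definition cone_form z : k := z 0 0 * z 1 0 - z 2 0 ^+ 2.
Definition cone_polar z w : k := z 0 0 * w 1 0 + z 1 0 * w 0 0 - 2 * z 2 0 * w 2 0.

Lemma cone_formD c mu z w : cone_form (c *: z + mu *: w) =
  c ^+ 2 * cone_form z + c * mu * cone_polar z w + mu ^+ 2 * cone_form w.
Proof. by rewrite /cone_form /cone_polar !mxE; ring. Qed.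

Lemma cone_form_e3 : cone_form (e3 k) = 0.
Proof. by rewrite /cone_form !mxE /=; ring. Qed.

Lemma cone_polar_e3 z : cone_polar (e3 k) z = 0.
Proof. by rewrite /cone_polar !mxE /=; ring. Qed.

Lemma eq_scale_e3 w : w 0 0 = 0 -> w 1 0 = 0 -> w 2 0 = 0 -> w = w 3 0 *: e3 k.
Proof.
move=> w0 w1 w2; apply/matrixP => i j; rewrite (ord1 j) !mxE mulr_natr.
case: i => [[|[|[|[|i]]]] lt_i] //=; rewrite ?mulr1n ?mulr0n;
  [rewrite -w0|rewrite -w1|rewrite -w2|]; by congr (w _ _); apply: val_inj.
Qed.

(* The square of each minor is a combination of cone_form z, cone_form w and
   cone_polar z w. *)
Lemma isotropic_minors z w :
  cone_form z = 0 -> cone_form w = 0 -> cone_polar z w = 0 ->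
  [/\ z 0 0 * w 1 0 = z 1 0 * w 0 0, z 0 0 * w 2 0 = z 2 0 * w 0 0
    & z 1 0 * w 2 0 = z 2 0 * w 1 0].
Proof.
rewrite /cone_form /cone_polar.
move: (z 0 0) (z 1 0) (z 2 0) (w 0 0) (w 1 0) (w 2 0) => a0 a1 a2 b0 b1 b2 Qa Qb Pab.
split; apply/eqP; rewrite -subr_eq0 -sqrf_eq0; apply/eqP.
- have -> : (a0 * b1 - a1 * b0) ^+ 2 =
      (a0 * b1 + a1 * b0 - 2 * a2 * b2) * (a0 * b1 + a1 * b0 + 2 * a2 * b2)
      - 4 * ((a0 * a1 - a2 ^+ 2) * (b0 * b1 - b2 ^+ 2)
             + (a0 * a1 - a2 ^+ 2) * b2 ^+ 2 + a2 ^+ 2 * (b0 * b1 - b2 ^+ 2)) by ring.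
  by rewrite Qa Qb Pab; ring.
- have -> : (a0 * b2 - a2 * b0) ^+ 2 = a0 * b0 * (a0 * b1 + a1 * b0 - 2 * a2 * b2)
      - a0 ^+ 2 * (b0 * b1 - b2 ^+ 2) - b0 ^+ 2 * (a0 * a1 - a2 ^+ 2) by ring.
  by rewrite Qa Qb Pab; ring.
- have -> : (a1 * b2 - a2 * b1) ^+ 2 = a1 * b1 * (a0 * b1 + a1 * b0 - 2 * a2 * b2)
      - a1 ^+ 2 * (b0 * b1 - b2 ^+ 2) - b1 ^+ 2 * (a0 * a1 - a2 ^+ 2) by ring.
  by rewrite Qa Qb Pab; ring.
Qed.

Lemma minors_proportional (a0 a1 a2 b0 b1 b2 : k) :
  a0 * b1 = a1 * b0 -> a0 * b2 = a2 * b0 -> a1 * b2 = a2 * b1 ->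
  ~ [/\ b0 = 0, b1 = 0 & b2 = 0] ->
  exists l, [/\ a0 = l * b0, a1 = l * b1 & a2 = l * b2].
Proof.
move=> m01 m02 m12 b_neq0.
have [b0_0|b0_neq0] := eqVneq b0 0; last first.
  by exists (a0 / b0); rewrite mulfVK // !(mulrAC a0 b0^-1) m01 m02 !mulfK.
have [b1_0|b1_neq0] := eqVneq b1 0; last first.
  by exists (a1 / b1); rewrite mulfVK // !(mulrAC a1 b1^-1) -m01 m12 !mulfK.
have [b2_0|b2_neq0] := eqVneq b2 0; first by case: b_neq0.
by exists (a2 / b2); rewrite mulfVK // !(mulrAC a2 b2^-1) -m02 -m12 !mulfK.
Qed.

Lemma isotropic_pair_dependent z w :
  cone_form z = 0 -> cone_form w = 0 -> cone_polar z w = 0 ->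
  ~ [/\ w 0 0 = 0, w 1 0 = 0 & w 2 0 = 0] ->
  exists l s, z = l *: w + s *: e3 k.
Proof.
move=> Qz Qw Pzw w_neq0; have [m01 m02 m12] := isotropic_minors Qz Qw Pzw.
have [l [z0 z1 z2]] := minors_proportional m01 m02 m12 w_neq0.
exists l, ((z - l *: w) 3 0); rewrite -[LHS](subrK (l *: w)) addrC.
by congr (_ + _); apply: eq_scale_e3; rewrite !mxE ?z0 ?z1 ?z2 subrr.
Qed.

End ConeForm.

Section Cone.
Variables (k : fieldType) (A : 'M[k]_4).
Hypothesis unitA : A \in unitmx.
Implicit Types (y w : 'cV[k]_4).

Lemma ev_linform i y : ev (linform A i) y = (A *m y) i 0.
Proof.
rewrite /ev /linform (big_morph _ (mevalD _) (meval0 _)) mxE.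
by apply: eq_bigr => j _; rewrite mevalZ mevalXU.
Qed.

Lemma ev_coneQ y : ev (coneQ A) y = cone_form (A *m y).
Proof. by rewrite /ev /coneQ mevalB mevalM expr2 mevalM -!/(ev _ _) !ev_linform. Qed.

Lemma mul_vertex : A *m vertex A = e3 k.
Proof. by rewrite mulmxA mulmxV ?mul1mx. Qed.

Lemma eq_scale_vertex w s : A *m w = s *: e3 k -> w = s *: vertex A.
Proof. by move=> Aw; rewrite -[w]mul1mx -(mulVmx unitA) -mulmxA Aw -scalemxAr. Qed.

Variable q : 'cV[k]_4.
Hypotheses (q_neq0 : q != 0) (cone_q : ev (coneQ A) q = 0)
           (q_not_vertex : ~ peq q (vertex A)).

Lemma coords_q_neq0 :
  ~ [/\ (A *m q) 0 0 = 0, (A *m q) 1 0 = 0 & (A *m q) 2 0 = 0].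
Proof.
case=> q0 q1 q2; have /eq_scale_vertex eq_q := eq_scale_e3 q0 q1 q2.
have [s0|s_neq0] := eqVneq ((A *m q) 3 0) 0.
  by move: q_neq0; rewrite eq_q s0 scale0r eqxx.
by apply: q_not_vertex; exists ((A *m q) 3 0).
Qed.

Lemma ruling_on_cone a b : ev (coneQ A) (a *: vertex A + b *: q) = 0.
Proof.
move: cone_q; rewrite !ev_coneQ mulmxDr -!scalemxAr mul_vertex cone_formD.
by move->; rewrite cone_form_e3 cone_polar_e3 !mulr0 !addr0.
Qed.

Lemma ruling_free a b : a *: vertex A + b *: q = 0 -> a = 0 /\ b = 0.
Proof.
move=> /(congr1 (mulmx A)).
rewrite mulmx0 mulmxDr -!scalemxAr mul_vertex => /matrixP eq0.
have coord i : a * e3 k i 0 + b * (A *m q) i 0 = 0 by move: (eq0 i 0); rewrite !mxE.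
have b0 : b = 0.
  have [//|b_neq0] := eqVneq b 0; case: coords_q_neq0.
  have coord_q (i : 'I_4) : (i < 3)%N -> b * (A *m q) i 0 = 0.
    by move=> lt_i3; move: (coord i); rewrite mxE ltn_eqF // mulr0 add0r.
  by split; apply: (mulfI b_neq0); rewrite mulr0 coord_q.
by split=> //; move: (coord 3); rewrite b0 mul0r addr0 !mxE mulr1.
Qed.

Lemma secant_on_ruling y c mu :
  ev (coneQ A) y = 0 -> ev (coneQ A) (c *: y + mu *: q) = 0 ->
  c != 0 -> mu != 0 -> on_line (vertex A) q y.
Proof.
move: cone_q; rewrite !ev_coneQ mulmxDr -!scalemxAr cone_formD => Qq Qy.
rewrite Qq Qy !mulr0 add0r addr0 => /eqP + c_neq0 mu_neq0.
rewrite !mulf_eq0 (negbTE c_neq0) (negbTE mu_neq0) => /eqP P0.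
have [l [s eq_Ay]] := isotropic_pair_dependent Qy Qq P0 coords_q_neq0.
exists s, l; apply/eqP; rewrite -subr_eq; apply/eqP/eq_scale_vertex.
by rewrite mulmxBr -scalemxAr eq_Ay addrAC subrr add0r.
Qed.

Variables (F : {mpoly k[4]}) (d : nat).
Hypotheses (homF : F \is d.-homog) (Fq : ev F q != 0).

Lemma curve_ruling_coef y a b :
  onY (coneQ A) F y -> y = a *: vertex A + b *: q -> a != 0.
Proof.
case=> y_neq0 [_ Fy] eq_y; apply: contra_neq y_neq0 => a0.
move: Fy; rewrite eq_y a0 scale0r add0r (ev_dhomogZ _ _ homF) => /eqP.
rewrite mulf_eq0 (negbTE Fq) orbF expf_eq0 => /andP[_ /eqP ->].
by rewrite scale0r.
Qed.

End Cone.

Lemma ruling_meets_curve (k : closedFieldType) (A : 'M[k]_4) (F : {mpoly k[4]}) d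
    (q : 'cV[k]_4) :
  A \in unitmx -> F \is d.-homog -> (0 < d)%N ->
  q != 0 -> ev (coneQ A) q = 0 -> ev F q != 0 -> ~ peq q (vertex A) ->
  exists2 y0, onY (coneQ A) F y0 & on_line (vertex A) q y0.
Proof.
move=> unitA homF d_gt0 q_neq0 cone_q Fq q_not_vertex.
have [t Ft] := homog_root_on_line (vertex A) homF d_gt0 Fq.
have eq_y0 : vertex A + t *: q = 1 *: vertex A + t *: q by rewrite scale1r.
exists (vertex A + t *: q); last by exists 1, t.
split; last by split; rewrite // eq_y0 ruling_on_cone.
rewrite eq_y0; apply/negP => /eqP /(ruling_free unitA q_neq0 q_not_vertex) [/eqP].
by rewrite oner_eq0.
Qed.

Theorem proposition4p5 (k : closedFieldType) (A : 'M[k]_4) (d : nat)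
    (F : {mpoly k[4]}) (q : 'cV[k]_4) :
  A \in unitmx ->
  (2 <= d)%N ->
  F \is d.-homog ->
  ~ (exists G : {mpoly k[4]}, F = G * coneQ A) ->
  prime_ideal2 (coneQ A) F ->
  only_unibranch (coneQ A) F ->
  q != 0 -> ev (coneQ A) q = 0 -> ev F q != 0 -> ~ peq q (vertex A) ->
  ((forall y1 y2, onY (coneQ A) F y1 -> onY (coneQ A) F y2 ->
      same_proj q y1 y2 -> peq y1 y2)
   <->
   (exists y0, [/\ onY (coneQ A) F y0, on_line (vertex A) q y0 &
      forall y, onY (coneQ A) F y -> on_line (vertex A) q y -> peq y y0])).
Proof.
move=> unitA d_ge2 homF _ _ _ q_neq0 cone_q Fq q_not_vertex.
have d_gt0 : (0 < d)%N by apply: leq_trans d_ge2.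
split=> [proj_inj | [y0 [_ _ ruling_unique]]].
- have [y0 Y_y0 [a0 [b0 eq_y0]]] :=
    ruling_meets_curve unitA homF d_gt0 q_neq0 cone_q Fq q_not_vertex.
  exists y0; split=> //; first by exists a0, b0.
  move=> y Y_y [a [b eq_y]]; apply: proj_inj => //.
  have a_neq0 := curve_ruling_coef homF Fq Y_y eq_y.
  have a0_neq0 := curve_ruling_coef homF Fq Y_y0 eq_y0.
  by rewrite eq_y eq_y0; apply: same_proj_on_line.
- move=> y1 y2 Y_y1 Y_y2 [c [mu [c_neq0 eq_y1]]].
  have [mu0|mu_neq0] := eqVneq mu 0.
    by exists c; split=> //; rewrite eq_y1 mu0 scale0r addr0.
  have ruling_y2 : on_line (vertex A) q y2.
    apply: (secant_on_ruling unitA q_neq0 cone_q q_not_vertex Y_y2.2.1 _ c_neq0 mu_neq0).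
    by rewrite -eq_y1; case: Y_y1 => _ [].
  have ruling_y1 : on_line (vertex A) q y1 by rewrite eq_y1; exact: on_line_shift.
  exact: peq_trans (ruling_unique _ Y_y1 ruling_y1)
                   (peq_sym (ruling_unique _ Y_y2 ruling_y2)).
Qed.
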